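(* Let $c>0$, $n=2^k$ with $ck$ an integer, and let $G$ be a graph on vertex set $\{0,1\}^k$ with property P: for every $U\subseteq V(G)$ with $|U|\le\tfrac13k$ and every pattern $p$ with $|p|\le\tfrac13k$, some vertex of $N(U)$ is consistent with $p$. Then in the Prover–Adversary game on $\mathrm{Clique}(G)$ the Adversary has a strategy that wins against any Prover who uses at most $\tfrac19k^2$ memory locations.
   Context: A pattern is $p\in\{*,0,1\}^k$; $p$ is consistent with vertex $v=v_1\cdots v_k$ if $p_i\in\{v_i,*\}$ for all $i$; $|p|$ is the number of non-$*$ positions. $N(U)=\bigcap_{v\in U}\{u:\{u,v\}\in E(G)\}$. $\mathrm{Clique}(G)$ is the CNF with variables $x^i_b$ ($i\in[ck]$, $b\in[k]$), writing $(x^i_b\ne v_b)$ for $\neg x^i_b$ if $v_b=1$ and $x^i_b$ if $v_b=0$, with clauses: for each vertex $v$ and distinct $i,j\in[ck]$, $\bigvee_b(x^i_b\ne v_b)\lor\bigvee_b(x^j_b\ne v_b)$; and for each pair of distinct vertices $u,v$ with $\{u,v\}\notin E(G)$ and distinct $i,j$, $\bigvee_b(x^i_b\ne u_b)\lor\bigvee_b(x^j_b\ne v_b)$. It is satisfiable iff $G$ has a clique of size $ck$. The Prover–Adversary game on a CNF $\phi$: the Prover holds a partial assignment in memory (each assigned variable occupies one memory location), initially empty. In each round the Prover either queries a variable, whose value the Adversary supplies and the Prover stores, or deletes a stored value (a deleted variable may later be queried again and answered differently). The Prover wins when the stored partial assignment falsifies some clause of $\phi$; the Adversary wins if the game continues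 forever. A Prover using at most $M$ memory locations never stores more than $M$ values simultaneously. *)

From mathcomp Require Import all_boot all_order all_algebra.
Set Implicit Arguments. Unset Strict Implicit. Unset Printing Implicit Defensive.

Definition vertex (k : nat) := {ffun 'I_k -> bool}.

(* Patterns in {*,0,1}^k: None = *, Some b = b. *)
Definition pattern (k : nat) := {ffun 'I_k -> option bool}.

Definition consistent k (p : pattern k) (v : vertex k) : bool :=
  [forall i, if p i is Some b then v i == b else true].

Definition psize k (p : pattern k) : nat := #|[set i | p i != None]|.

Definition commonN k (e : rel (vertex k)) (U : {set vertex k}) : {set vertex k} :=
  [set u | [forall v in U, e u v]].

(* Property P (sizes <= k/3 written as 3 * size <= k). *)
Definition propP k (e : rel (vertex k)) : Prop :=
  forall U : {set vertex k}, 3 * #|U| <= k ->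
  forall p : pattern k, 3 * psize p <= k ->
  exists u, u \in commonN e U /\ consistent p u.

(* Variables x^i_b, i in [m] (m = ck), b in [k]. *)
Definition var (m k : nat) := ('I_m * 'I_k)%type.

(* A literal (x, pol) is satisfied iff x takes value pol. *)
Definition lit (m k : nat) := (var m k * bool)%type.
Definition clause (m k : nat) := seq (lit m k).

(* \/_b (x^i_b != v_b): the literal (x^i_b != v_b) is ~x if v_b = 1, x if v_b = 0,
   i.e. the literal with polarity ~~ v_b. *)
Definition block_clause m k (i : 'I_m) (v : vertex k) : clause m k :=
  [seq ((i, b), ~~ v b) | b <- enum 'I_k].

Definition clique_clause m k (e : rel (vertex k)) (C : clause m k) : Prop :=
  (exists (v : vertex k) (i j : 'I_m), i != j /\
      C = block_clause i v ++ block_clause j v) \/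
  (exists (u v : vertex k) (i j : 'I_m), u != v /\ ~~ e u v /\ i != j /\
      C = block_clause i u ++ block_clause j v).

(* Partial assignments (Prover's memory). *)
Definition passign (m k : nat) := {ffun var m k -> option bool}.

Definition empty_passign m k : passign m k := [ffun _ => None].

Definition memsize m k (rho : passign m k) : nat := #|[set x | rho x != None]|.

Definition falsifies m k (rho : passign m k) (C : clause m k) : bool :=
  all (fun l : lit m k => rho l.1 == Some (~~ l.2)) C.

Definition falsifies_clique m k (e : rel (vertex k)) (rho : passign m k) : Prop :=
  exists C : clause m k, clique_clause e C /\ falsifies rho C.

Inductive action (m k : nat) : Type :=
  | AQuery of var m k
  | ADelete of var m k.

Inductive move (m k : nat) : Type :=
  | Query of var m k & bool  (* queried variable and the Adversary's answer *)
  | Delete of var m k.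

Definition apply_move m k (rho : passign m k) (mv : move m k) : passign m k :=
  match mv with
  | Query x b => [ffun y => if y == x then Some b else rho y]
  | Delete x => [ffun y => if y == x then None else rho y]
  end.

Definition state m k (h : seq (move m k)) : passign m k :=
  foldl (@apply_move m k) (empty_passign m k) h.

Definition prover_strategy (m k : nat) := seq (move m k) -> action m k.
Definition adversary_strategy (m k : nat) := seq (move m k) -> var m k -> bool.

Fixpoint play m k (P : prover_strategy m k) (A : adversary_strategy m k) (n : nat)
  : seq (move m k) :=
  match n with
  | 0 => [::]
  | n'.+1 =>
      let h := play P A n' in
      rcons h (match P h with
               | AQuery x => Query x (A h x)
               | ADelete x => Delete x
               end)
  end.

Definition adversary_wins_mem m k (e : rel (vertex k)) (A : adversary_strategy m k)
  (memOK : nat -> Prop) : Prop :=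
  forall (P : prover_strategy m k) (n : nat),
    (forall j, j <= n -> memOK (memsize (state (play P A j)))) ->
    ~ falsifies_clique e (state (play P A n)).

From mathcomp Require Import all_boot all_order all_algebra.
From mathcomp Require Import zify.
Import GRing.Theory Num.Theory.

Set Implicit Arguments. Unset Strict Implicit. Unset Printing Implicit Defensive.

(* The Adversary keeps in mind a vertex [f i] for every block [i] of variables
   [x^i_1 .. x^i_k] and answers every query according to it.  Call a block heavy
   when more than k/3 of its bits are stored; with at most k^2/9 memory
   locations at most k/3 blocks are heavy.  Before answering a query to a
   light block, the Adversary re-chooses its vertex: consistent with the at most
   k/3 stored bits of the block and adjacent to the vertices of all heavy
   blocks, which property P makes possible.  Hence the stored values always
   agree with [f] and the vertices of distinct heavy blocks are adjacent.  A
   falsified clause needs two distinct fully stored, hence heavy, blocks whose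
   vertices are equal or non-adjacent, which the invariant (and the
   irreflexivity of [e]) rules out. *)

Section CliqueAdversary.

Variables (m k : nat).
Implicit Types (rho : passign m k) (f : 'I_m -> vertex k) (i j : 'I_m) (x : var m k).

Definition nstored rho i : nat := #|[set b : 'I_k | rho (i, b) != None]|.

Definition heavy rho i : bool := k < 3 * nstored rho i.

Lemma memsize_sum rho : memsize rho = \sum_i nstored rho i.
Proof.
rewrite /memsize /nstored -sum1_card.
under [RHS]eq_bigr do rewrite -sum1_card.
rewrite pair_big_dep /=; apply: eq_bigl => -[i b]; by rewrite !inE.
Qed.

Lemma heavy_card_memsize rho : k.+1 * #|[set i | heavy rho i]| <= 3 * memsize rho.
Proof.
rewrite memsize_sum big_distrr /= mulnC -sum_nat_const.
rewrite [X in _ <= X](bigID (mem [set i | heavy rho i])) /=.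
apply: leq_trans (leq_addr _ _); apply: leq_sum => i.
by rewrite inE.
Qed.

Lemma heavy_card_le rho : 9 * memsize rho <= k ^ 2 -> 3 * #|[set i | heavy rho i]| <= k.
Proof. have := heavy_card_memsize rho; nia. Qed.

Lemma nstored_query_other rho x b j :
  j != x.1 -> nstored (apply_move rho (Query x b)) j = nstored rho j.
Proof.
move=> jx; apply: eq_card => b'; rewrite !inE ffunE.
by case: x jx => i0 b0 /= jx; rewrite xpair_eqE (negbTE jx).
Qed.

Lemma nstored_delete rho x j : nstored (apply_move rho (Delete x)) j <= nstored rho j.
Proof.
apply: subset_leq_card; apply/subsetP => b; rewrite !inE ffunE.
by case: ifP.
Qed.

Lemma heavy_full rho i : 0 < k -> (forall b, rho (i, b) != None) -> heavy rho i.
Proof.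
move=> k_gt0 full; rewrite /heavy /nstored.
have -> : [set b | rho (i, b) != None] = setT by apply/setP => b; rewrite !inE full.
rewrite cardsT card_ord; lia.
Qed.

Lemma falsifies_block_clause rho i v :
  falsifies rho (block_clause i v) -> forall b, rho (i, b) = Some (v b).
Proof.
move=> /allP falsified b; apply/eqP.
have := falsified ((i, b), ~~ v b); rewrite negbK; apply.
by rewrite map_f ?mem_enum.
Qed.

Variable e : rel (vertex k).
Hypotheses (esym : symmetric e) (HP : propP e).

Definition block_pattern rho i : pattern k := [ffun b => rho (i, b)].

Lemma psize_block_pattern rho i : psize (block_pattern rho i) = nstored rho i.
Proof. by apply: eq_card => b; rewrite !inE ffunE. Qed.

Definition heavy_vertices f rho : {set vertex k} := [set f j | j in [set j | heavy rho j]].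

Definition reassign f rho i : 'I_m -> vertex k :=
  if heavy rho i then f else
  match [pick u | (u \in commonN e (heavy_vertices f rho))
                  && consistent (block_pattern rho i) u] with
  | Some u => fun j => if j == i then u else f j
  | None => f  (* only when the memory bound is already exceeded *)
  end.

Record adv_inv f rho : Prop := AdvInv {
  adv_inv_stored : forall i b g, rho (i, b) = Some g -> f i b = g;
  adv_inv_heavy : forall i j, i != j -> heavy rho i -> heavy rho j -> e (f i) (f j)
}.

Lemma reassign_spec f rho i :
  9 * memsize rho <= k ^ 2 -> adv_inv f rho ->
  let f' := reassign f rho i in
  [/\ forall j, j != i -> f' j = f j,
      forall b g, rho (i, b) = Some g -> f' i b = g
    & forall j, j != i -> heavy rho j -> e (f' i) (f j)].
Proof.
move=> mem_le [stored adj]; rewrite /reassign.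
have [heavy_i | light_i] := ifPn.
  split=> // [b g /stored // | j ji heavy_j].
  by apply: adj; rewrite // eq_sym.
case: pickP => [u /andP[u_adj u_cons] | no_u]; last first.
  have U_le : 3 * #|heavy_vertices f rho| <= k.
    apply: leq_trans (heavy_card_le mem_le).
    by rewrite leq_mul2l leq_imset_card orbT.
  have p_le : 3 * psize (block_pattern rho i) <= k.
    by rewrite psize_block_pattern leqNgt.
  have [u [u_adj u_cons]] := HP U_le p_le.
  by move: (no_u u); rewrite u_adj u_cons.
rewrite eqxx; split.
- by move=> j /negbTE ->.
- move=> b g rho_ib; move/forallP: u_cons => /(_ b).
  by rewrite ffunE rho_ib => /eqP.
- move=> j _ heavy_j; move: u_adj; rewrite inE => /forallP /(_ (f j)) /implyP.
  by apply; rewrite imset_f ?inE.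
Qed.

Lemma adv_inv_query f f' rho x :
  adv_inv f rho ->
  (forall j, j != x.1 -> f' j = f j) ->
  (forall b g, rho (x.1, b) = Some g -> f' x.1 b = g) ->
  (forall j, j != x.1 -> heavy rho j -> e (f' x.1) (f j)) ->
  adv_inv f' (apply_move rho (Query x (f' x.1 x.2))).
Proof.
move=> [stored adj] f'_other f'_stored f'_adj; split.
- move=> j b g; rewrite ffunE; case: eqP => [jbx [<-] | _ rho_jb]; first by rewrite -jbx.
  have [jx | jx] := eqVneq j x.1; first by rewrite jx in rho_jb *; apply: f'_stored.
  by rewrite f'_other //; apply: stored.
- have heavy_other j : j != x.1 -> heavy (apply_move rho (Query x (f' x.1 x.2))) j = heavy rho j.
    by move=> jx; rewrite /heavy nstored_query_other.
  move=> j1 j2.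
  have [-> | j1x] := eqVneq j1 x.1; have [-> | j2x] := eqVneq j2 x.1.
  + by [].
  + by rewrite (heavy_other j2) // (f'_other j2) // => _ _; apply: f'_adj.
  + by rewrite (heavy_other j1) // (f'_other j1) // esym => _ ? _; apply: f'_adj.
  + by rewrite !heavy_other // !f'_other //; apply: adj.
Qed.

Lemma adv_inv_delete f rho x : adv_inv f rho -> adv_inv f (apply_move rho (Delete x)).
Proof.
case=> stored adj; split.
- by move=> j b g; rewrite ffunE; case: ifP => // _; apply: stored.
- have heavy_delete j : heavy (apply_move rho (Delete x)) j -> heavy rho j.
    by move=> /leq_trans; apply; rewrite leq_mul2l nstored_delete orbT.
  by move=> i j ij /heavy_delete heavy_i /heavy_delete; apply: adj.
Qed.

Lemma adv_inv_falsifies f rho i j u v :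
  0 < k -> i != j -> adv_inv f rho ->
  falsifies rho (block_clause i u ++ block_clause j v) -> e u v.
Proof.
move=> k_gt0 ij [stored adj]; rewrite /falsifies all_cat.
case/andP=> /falsifies_block_clause rho_i /falsifies_block_clause rho_j.
have f_i : f i = u by apply/ffunP => b; apply: stored (rho_i b).
have f_j : f j = v by apply/ffunP => b; apply: stored (rho_j b).
rewrite -f_i -f_j; apply: adj => //; apply: heavy_full => // b.
- by rewrite rho_i.
- by rewrite rho_j.
Qed.

Definition adv_step (s : ('I_m -> vertex k) * passign m k) (mv : move m k) :=
  match mv with
  | Query x _ => (reassign s.1 s.2 x.1, apply_move s.2 mv)
  | Delete _ => (s.1, apply_move s.2 mv)
  end.

Definition adv_state (h : seq (move m k)) :=
  foldl adv_step (fun _ => [ffun _ => false], empty_passign m k) h.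

Definition adversary : adversary_strategy m k :=
  fun h x => reassign (adv_state h).1 (adv_state h).2 x.1 x.1 x.2.

Lemma adv_state_passign h : (adv_state h).2 = state h.
Proof.
rewrite /adv_state /state; elim/last_ind: h => [|h mv IH] //.
by rewrite !foldl_rcons -IH; case: mv.
Qed.

Lemma adv_inv_play (P : prover_strategy m k) n :
  (forall t : nat, t <= n -> 9 * memsize (state (play P adversary t)) <= k ^ 2) ->
  adv_inv (adv_state (play P adversary n)).1 (adv_state (play P adversary n)).2.
Proof.
elim: n => [|n IH] mem_le.
  split=> [i b g | i j _]; first by rewrite ffunE.
  rewrite /heavy /nstored.
  have -> : [set b | empty_passign m k (i, b) != None] = set0.
    by apply/setP => b; rewrite !inE ffunE.
  by rewrite cards0.
have inv_n := IH (fun t le_tn => mem_le t (leqW le_tn)).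
rewrite /= /adv_state foldl_rcons -/(adv_state _).
case: (P _) => x; last exact: adv_inv_delete.
have mem_n := mem_le n (leqnSn n); rewrite -adv_state_passign in mem_n.
have [f'_other f'_stored f'_adj] := reassign_spec x.1 mem_n inv_n.
exact: (adv_inv_query inv_n f'_other f'_stored f'_adj).
Qed.

End CliqueAdversary.

Theorem mainTheorem6 (k m : nat) (c : rat)
  (hc : (0 < c)%R) (hm : (c * k%:R)%R = (m%:R)%R)
  (e : rel (vertex k)) (esym : symmetric e) (eirr : irreflexive e)
  (HP : propP e) :
  exists A : adversary_strategy m k,
    adversary_wins_mem e A (fun s => (9 * s <= k ^ 2)%N).
Proof.
exists (adversary e) => P n mem_le [C [clique_C falsified]].
have inv := adv_inv_play esym HP mem_le.
rewrite -(adv_state_passign e) in falsified.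
have k_gt0 (i : 'I_m) : (0 < k)%N.
  have := leq_ltn_trans (leq0n i) (ltn_ord i); rewrite !lt0n.
  by apply: contra => /eqP k0; rewrite -(eqr_nat rat) -hm k0 mulr0.
case: clique_C => [[v [i [j [ij C_def]]]] | [u [v [i [j [_ [nadj [ij C_def]]]]]]]];
  move: falsified; rewrite C_def => /(adv_inv_falsifies (k_gt0 i) ij inv).
- by rewrite eirr.
- by rewrite (negbTE nadj).
Qed.
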